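(* Let $n,q\ge1$ and $c\ge0$ be integers. If there exists a $PComS(n,q,-c)$, then there exists a partial Hadamard matrix $PH(n\times(nq+c))$.
   Context: $\mathbb{Z}_2^n$ is the set of sequences $X=(x_0,\dots,x_{n-1})$ with entries in $\{+1,-1\}$, indices mod $n$. The periodic autocorrelation is $\mathsf{P}_X(k)=\sum_{i=0}^{n-1}x_ix_{i+k}$; it depends only on the cyclic-shift class $X_C$. A $PComS(n,q,c)$ is a list (repetitions allowed) of $q$ cyclic-shift classes $A_{1C},\dots,A_{qC}$ with $A_i\in\mathbb{Z}_2^n$ such that $\sum_{i=1}^q\mathsf{P}_{A_i}(k)=c$ for all $1\le k\le n-1$. A partial Hadamard matrix $PH(k\times m)$ is a $k\times m$ matrix $H$ with all entries in $\{+1,-1\}$ satisfying $HH^{t}=mI_k$. *)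

From mathcomp Require Import all_boot all_algebra.
Set Implicit Arguments. Unset Strict Implicit. Unset Printing Implicit Defensive.
Import GRing.Theory Num.Theory.
Local Open Scope ring_scope.

Definition pm1_seq (n : nat) (X : seq int) : bool :=
  (size X == n) && all (fun x => (x == 1) || (x == -1)) X.

Definition paf (n : nat) (X : seq int) (k : nat) : int :=
  \sum_(i < n) X`_i * X`_((i + k) %% n).

(* PComS(n,q,c): a list of q sequences of Z_2^n (representatives of the
   cyclic-shift classes; P_X depends only on the class) whose periodic
   autocorrelations sum to c at every shift 1 <= k <= n-1. *)
Definition PComS (n q : nat) (c : int) (L : seq (seq int)) : Prop :=
  [/\ size L = q,
      all (pm1_seq n) L &
      forall k : nat, (1 <= k <= n - 1)%N -> \sum_(A <- L) paf n A k = c].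

Definition partial_hadamard (k m : nat) (H : 'M[int]_(k, m)) : Prop :=
  (forall i j, H i j = 1 \/ H i j = -1) /\ H *m H^T = (m%:R)%:M.

From mathcomp Require Import all_boot all_algebra.
From mathcomp Require Import zify.
Set Implicit Arguments. Unset Strict Implicit. Unset Printing Implicit Defensive.
Import GRing.Theory Num.Theory.
Local Open Scope ring_scope.

(* Put the circulant matrices of the q sequences side by side and append c
   all-ones columns. Entry (i, i') of the Gram matrix of the circulant of X is
   P_X(i' - i), so the circulant blocks contribute nq on the diagonal and
   -c off it; the all-ones block adds c everywhere, leaving (nq + c) I. *)

Definition circulant (n : nat) (X : seq int) : 'M[int]_n :=
  \matrix_(i, j) X`_((i + j) %% n).

Lemma pm1_seq_nth n X i : pm1_seq n X -> (i < n)%N -> X`_i = 1 \/ X`_i = -1.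
Proof.
case/andP=> /eqP sizeX /allP pmX lt_in.
have : X`_i \in X by rewrite mem_nth // sizeX.
by move=> /pmX/orP[]/eqP ->; [left | right].
Qed.

Lemma circulant_pm1 n X i j : pm1_seq n X ->
  circulant n X i j = 1 \/ circulant n X i j = -1.
Proof.
move=> pmX; rewrite mxE; apply: pm1_seq_nth pmX _.
by rewrite ltn_pmod // (leq_ltn_trans (leq0n i) (ltn_ord i)).
Qed.

Lemma paf0_pm1 n X : pm1_seq n X -> paf n X 0 = n%:R.
Proof.
move=> pmX; rewrite /paf -[n in RHS]card_ord -sumr_const.
apply: eq_bigr => i _; rewrite addn0 modn_small //.
by case: (pm1_seq_nth pmX (ltn_ord i)) => ->.
Qed.

Lemma sum_ord_rot (V : nmodType) n (F : nat -> V) (i : nat) :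
  \sum_(j < n) F ((i + j) %% n)%N = \sum_(j < n) F j.
Proof.
case: n => [|n] in F *; first by rewrite !big_ord0.
pose rot (j : 'I_n.+1) := Ordinal (ltn_pmod (i + j)%N (ltn0Sn n)).
have rot_inj : injective rot.
  move=> j j' /(congr1 val) /eqP /=.
  by rewrite eqn_modDl !modn_small // => /eqP/val_inj.
by rewrite [RHS](reindex_inj rot_inj).
Qed.

Lemma circulant_mul_tr n X (i i' : 'I_n) :
  (circulant n X *m (circulant n X)^T) i i' = paf n X ((i' + (n - i)) %% n).
Proof.
rewrite mxE /paf.
rewrite -(@sum_ord_rot _ n (fun t => X`_t * X`_((t + (i' + (n - i)) %% n) %% n)) i).
apply: eq_bigr => j _; rewrite !mxE modnDm.
have -> : (i + j + (i' + (n - i)) = n + (i' + j))%N by have := ltn_ord i; lia.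
by rewrite modnDl.
Qed.

Lemma shift_mod_eq0 n (i i' : 'I_n) : ((i' + (n - i)) %% n == 0)%N = (i == i').
Proof.
have lt_in := ltn_ord i; have lt_i'n := ltn_ord i'.
apply/eqP/eqP => [|->]; last by rewrite subnKC ?modnn // ltnW.
case: (ltnP i' i) => [lt_i'i | le_ii'].
  by rewrite modn_small //; lia.
rewrite (_ : i' + (n - i) = n + (i' - i))%N; last by lia.
rewrite modnDl modn_small; last by lia.
by move=> ?; apply: ord_inj; lia.
Qed.

Lemma mulmx_const1_tr (R : pzRingType) m p :
  (const_mx 1 : 'M[R]_(m, p)) *m (const_mx 1 : 'M[R]_(m, p))^T = const_mx p%:R.
Proof.
apply/matrixP => i j; rewrite !mxE.
by under eq_bigr do rewrite !mxE mulr1; rewrite sumr_const card_ord.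
Qed.

Lemma PComS_pm1 n q c L a : PComS n q c L -> (a < q)%N -> pm1_seq n (nth [::] L a).
Proof. by case=> sizeL /allP pmL _ lt_aq; rewrite pmL // mem_nth ?sizeL. Qed.

Lemma PComS_circulant_gram n q c L : PComS n q c L ->
  \sum_(a < q) circulant n (nth [::] L a) *m (circulant n (nth [::] L a))^T =
  ((n * q)%:R - c)%:M + const_mx c.
Proof.
move=> PCL; have [sizeL _ pafL] := PCL.
apply/matrixP => i i'; rewrite summxE !mxE.
under eq_bigr do rewrite circulant_mul_tr.
have [<-|neq_ii'] := eqVneq i i'.
  have -> : ((i + (n - i)) %% n = 0)%N by rewrite subnKC ?modnn // ltnW.
  under eq_bigr => a _ do rewrite (paf0_pm1 (PComS_pm1 PCL (ltn_ord a))).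
  by rewrite mulr1n subrK sumr_const card_ord natrM mulr_natr.
have shift_range : (1 <= (i' + (n - i)) %% n <= n - 1)%N.
  have n_gt0 : (0 < n)%N := leq_ltn_trans (leq0n i) (ltn_ord i).
  by rewrite lt0n shift_mod_eq0 neq_ii' -ltnS subn1 prednK ?ltn_pmod.
by rewrite mulr0n add0r -(pafL _ shift_range) (big_nth [::]) sizeL big_mkord.
Qed.

Theorem theorem20 (n q c : nat) :
  (1 <= n)%N -> (1 <= q)%N ->
  (exists L : seq (seq int), PComS n q (- (c%:Z)) L) ->
  exists H : 'M[int]_(n, n * q + c), partial_hadamard H.
Proof.
move=> _ _ [L PCL].
have width : (\sum_(a < q) n + c = n * q + c)%N.
  by rewrite sum_nat_const card_ord mulnC.
rewrite -width.
exists (row_mx (\mxrow_(a < q) circulant n (nth [::] L a)) (const_mx 1)); split.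
  move=> i j; rewrite mxE; case: split => j'; rewrite mxE; last by left.
  exact/circulant_pm1/(PComS_pm1 PCL).
rewrite tr_row_mx mul_row_col tr_mxrow mul_mxrow_mxcol (PComS_circulant_gram PCL).
rewrite mulmx_const1_tr [in RHS]width.
by apply/matrixP => i j; rewrite !mxE natrD !natz opprK subrK.
Qed.
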